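(* For every $n\ge0$, the localization $(\underline n\downarrow\mathbf{Fin})[\mathcal I^{-1}]$, obtained from the coslice category $(\underline n\downarrow\mathbf{Fin})$ by formally inverting all morphisms whose underlying map is injective, is a thin category.
   Context: $\mathbf{Fin}$ is the category with objects $\underline k=\{1,\dots,k\}$ for $k\ge0$ and morphisms all functions. $\mathcal I$ denotes the injective maps (inverting the injective order-preserving maps together with the isomorphisms inverts all injective maps). Objects of $(\underline n\downarrow\mathbf{Fin})$ are functions $\underline n\to\underline k$, morphisms are functions $\underline k\to\underline k'$ making the triangle commute. A category is thin if any two parallel morphisms are equal. *)

From mathcomp Require Import all_boot.
Set Implicit Arguments. Unset Strict Implicit. Unset Printing Implicit Defensive.

(* The coslice category (n | Fin): objects are maps  n -> k  (k >= 0). *)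
Definition cobj (n : nat) := {k : nat & {ffun 'I_n -> 'I_k}}.

Definition ccod n (a : cobj n) : nat := projT1 a.
Definition cmap n (a : cobj n) : {ffun 'I_n -> 'I_(ccod a)} := projT2 a.

Definition is_chom {n} (a b : cobj n) (g : {ffun 'I_(ccod a) -> 'I_(ccod b)}) : bool :=
  [forall i, g (cmap a i) == cmap b i].

Arguments is_chom {n} a b g.

Definition chom n (a b : cobj n) := {g : {ffun 'I_(ccod a) -> 'I_(ccod b)} | is_chom a b g}.

Lemma chom_id_proof n (a : cobj n) : is_chom a a [ffun x => x].
Proof. by apply/forallP => i; rewrite ffunE. Qed.

Definition chom_id n (a : cobj n) : chom a a := exist (is_chom a a) _ (chom_id_proof a).

Lemma chom_comp_proof n (a b c : cobj n) (g : chom a b) (h : chom b c) :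
  is_chom a c [ffun x => sval h (sval g x)].
Proof.
apply/forallP => i; rewrite ffunE.
have /forallP/(_ i)/eqP -> := proj2_sig g.
exact: (forallP (proj2_sig h)).
Qed.

Definition chom_comp n (a b c : cobj n) (g : chom a b) (h : chom b c) : chom a c :=
  exist (is_chom a c) _ (chom_comp_proof g h).

Definition inj_hom n (a b : cobj n) (g : chom a b) : bool := injectiveb (sval g).

(* Localization (n | Fin)[I^-1], standard construction: morphisms are zigzags
   (formal composable strings of morphisms and formal inverses of morphisms in I),
   read left to right, modulo the smallest congruence generated by the relations
   of the category and the inverse relations. *)
Inductive zz n : cobj n -> cobj n -> Type :=
| zz_nil (a : cobj n) : zz a a
| zz_fwd (a b c : cobj n) (g : chom a b) : zz b c -> zz a c
| zz_bwd (a b c : cobj n) (w : chom b a) : inj_hom w -> zz b c -> zz a c.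

Fixpoint zz_cat n (a b c : cobj n) (p : zz a b) : zz b c -> zz a c :=
  match p in zz x y return zz y c -> zz x c with
  | zz_nil _ => fun s => s
  | zz_fwd _ _ _ g p' => fun s => zz_fwd g (zz_cat p' s)
  | zz_bwd _ _ _ w hw p' => fun s => zz_bwd hw (zz_cat p' s)
  end.

Inductive zz_equiv n : forall a b : cobj n, zz a b -> zz a b -> Prop :=
| zze_refl a b (p : zz a b) : zz_equiv p p
| zze_sym a b (p q : zz a b) : zz_equiv p q -> zz_equiv q p
| zze_trans a b (p q r : zz a b) : zz_equiv p q -> zz_equiv q r -> zz_equiv p r
| zze_ctx x a b y (r : zz x a) (p q : zz a b) (s : zz b y) :
    zz_equiv p q -> zz_equiv (zz_cat r (zz_cat p s)) (zz_cat r (zz_cat q s))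
| zze_id a : zz_equiv (zz_fwd (chom_id a) (zz_nil a)) (zz_nil a)
| zze_comp a b c (g : chom a b) (h : chom b c) :
    zz_equiv (zz_fwd g (zz_fwd h (zz_nil c))) (zz_fwd (chom_comp g h) (zz_nil c))
| zze_inv_r a b (w : chom a b) (hw : inj_hom w) :
    zz_equiv (zz_fwd w (zz_bwd hw (zz_nil a))) (zz_nil a)
| zze_inv_l a b (w : chom a b) (hw : inj_hom w) :
    zz_equiv (zz_bwd hw (zz_fwd w (zz_nil b))) (zz_nil b).

Definition localization_thin (n : nat) : Prop :=
  forall (a b : cobj n) (p q : zz a b), zz_equiv p q.

From mathcomp Require Import all_boot.
Set Implicit Arguments. Unset Strict Implicit. Unset Printing Implicit Defensive.

(* Every object a = (f : n -> k) factors through its image: a = s(a) ; iota_a,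
   where s(a) = (n ->> im f) has a surjective structure map and
   iota_a : s(a) -> a is the injective inclusion of the image.
   1. Out of an object with surjective structure map there is at most one
      morphism, and there is one as soon as the kernel of its map is contained
      in the kernel of the target's map.
   2. In the localization, a commuting square  x ; w' = w ; y  with w, w'
      injective yields  w^-1 ; x = y ; w'^-1.
   3. Using 1 and 2, induction on zigzags shows that every zigzag a -> b is
      equivalent to a normal form  iota_a^-1 ; c  with c : s(a) -> b.
   By 1, the morphism c is unique, so any two parallel zigzags are equivalent. *)

Section Localization.
Variable n : nat.
Implicit Types a b c : cobj n.

Lemma chomP a b (g : chom a b) i : sval g (cmap a i) = cmap b i.
Proof. exact/eqP/(forallP (proj2_sig g)). Qed.

Lemma chom_eq a b (g h : chom a b) : (forall x, sval g x = sval h x) -> g = h.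
Proof. by move=> E; apply: val_inj; apply/ffunP. Qed.

Lemma inj_hom_comp a b c (y : chom a b) (x : chom b c) :
  inj_hom y -> inj_hom x -> inj_hom (chom_comp y x).
Proof.
move=> /injectiveP inj_y /injectiveP inj_x; apply/injectiveP => u v.
by rewrite /= !ffunE => /inj_x /inj_y.
Qed.

Definition ker_sub a b : Prop :=
  forall i1 i2, cmap a i1 = cmap a i2 -> cmap b i1 = cmap b i2.

Lemma ker_sub_trans a b c : ker_sub a b -> ker_sub b c -> ker_sub a c.
Proof. by move=> ab bc i1 i2 /ab /bc. Qed.

Lemma chom_ker_sub a b : chom a b -> ker_sub a b.
Proof. by move=> g i1 i2 E; rewrite -!(chomP g) E. Qed.

Lemma inj_hom_ker_sub a b (w : chom b a) : inj_hom w -> ker_sub a b.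
Proof. by move=> /injectiveP inj_w i1 i2 E; apply: inj_w; rewrite !chomP. Qed.

Definition surj_obj a : Prop := forall j, exists i, cmap a i = j.

Lemma surj_chom_unique a b (g h : chom a b) : surj_obj a -> g = h.
Proof.
by move=> surj_a; apply: chom_eq => j; have [i <-] := surj_a j; rewrite !chomP.
Qed.

Lemma surj_chom_exists a b : surj_obj a -> ker_sub a b -> inhabited (chom a b).
Proof.
move=> surj_a ker_ab.
have [pre preK] := fin_all_exists surj_a.
constructor; exists [ffun j => cmap b (pre j)].
by apply/forallP => i; rewrite ffunE; apply/eqP/ker_ab/preK.
Qed.

Definition img a : seq 'I_(ccod a) := undup (codom (cmap a)).

Lemma img_cmap a i : cmap a i \in img a.
Proof. by rewrite mem_undup codom_f. Qed.

Lemma index_img a i : index (cmap a i) (img a) < size (img a).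
Proof. by rewrite index_mem img_cmap. Qed.

(* s(a) : n ->> im (cmap a), indexing the image by the positions in img a. *)
Definition sobj a : cobj n :=
  existT (fun k => {ffun 'I_n -> 'I_k}) (size (img a))
         [ffun i => Ordinal (index_img a i)].

Lemma iota_is_chom a : is_chom (sobj a) a [ffun j => tnth (in_tuple (img a)) j].
Proof.
apply/forallP => i; rewrite /cmap /= !ffunE (tnth_nth (cmap a i)) /=.
by rewrite nth_index ?img_cmap.
Qed.

Definition iota a : chom (sobj a) a := exist (is_chom (sobj a) a) _ (iota_is_chom a).

Lemma iota_inj a : inj_hom (iota a).
Proof.
apply/injectiveP => u v; rewrite /= !ffunE.
exact/(tuple_uniqP (in_tuple (img a)) (undup_uniq _)).
Qed.

Lemma sobj_surj a : surj_obj (sobj a).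
Proof.
move=> j; have : tnth (in_tuple (img a)) j \in img a by apply: mem_tnth.
rewrite mem_undup => /codomP [i Ei]; exists i.
by apply: (injectiveP _ (iota_inj a)); rewrite chomP /= ffunE Ei.
Qed.

Lemma ker_sub_sobj a : ker_sub a (sobj a).
Proof. exact: inj_hom_ker_sub (iota_inj a). Qed.

Lemma ker_sub_sobj_l a b : ker_sub a b -> ker_sub (sobj a) b.
Proof. exact: ker_sub_trans (chom_ker_sub (iota a)). Qed.

Lemma zz_cat_nil a b (p : zz a b) : zz_cat p (zz_nil b) = p.
Proof. by elim: p => //= [a0 b0 c0 g p -> | a0 b0 c0 w hw p ->]. Qed.

Lemma zze_fwd a b c (g : chom a b) (p q : zz b c) :
  zz_equiv p q -> zz_equiv (zz_fwd g p) (zz_fwd g q).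
Proof.
move=> pq; have := zze_ctx (zz_fwd g (zz_nil b)) (zz_nil c) pq.
by rewrite /= !zz_cat_nil.
Qed.

Lemma zze_bwd a b c (w : chom b a) (hw : inj_hom w) (p q : zz b c) :
  zz_equiv p q -> zz_equiv (zz_bwd hw p) (zz_bwd hw q).
Proof.
move=> pq; have := zze_ctx (zz_bwd hw (zz_nil b)) (zz_nil c) pq.
by rewrite /= !zz_cat_nil.
Qed.

Lemma zze_id_l a b (p : zz a b) : zz_equiv (zz_fwd (chom_id a) p) p.
Proof. exact: (zze_ctx (zz_nil a) p (zze_id a)). Qed.

Lemma zze_comp_l a b c d (g : chom a b) (h : chom b c) (p : zz c d) :
  zz_equiv (zz_fwd g (zz_fwd h p)) (zz_fwd (chom_comp g h) p).
Proof. exact: (zze_ctx (zz_nil a) p (zze_comp g h)). Qed.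

Lemma zze_inv_r_l a b c (w : chom a b) (hw : inj_hom w) (p : zz a c) :
  zz_equiv (zz_fwd w (zz_bwd hw p)) p.
Proof. exact: (zze_ctx (zz_nil a) p (zze_inv_r hw)). Qed.

Lemma zze_inv_l_l a b c (w : chom a b) (hw : inj_hom w) (p : zz b c) :
  zz_equiv (zz_bwd hw (zz_fwd w p)) p.
Proof. exact: (zze_ctx (zz_nil b) p (zze_inv_l hw)). Qed.

Lemma zze_bwd_comp a b c d (x : chom b a) (y : chom c b) (hx : inj_hom x)
    (hy : inj_hom y) (hyx : inj_hom (chom_comp y x)) (p : zz c d) :
  zz_equiv (zz_bwd hx (zz_bwd hy p)) (zz_bwd hyx p).
Proof.
apply: zze_sym; apply: zze_trans (zze_sym (zze_inv_l_l hx (zz_bwd hyx p))) _.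
apply: zze_bwd; apply: zze_trans (zze_sym (zze_inv_l_l hy _)) _.
apply: zze_bwd; apply: zze_trans (zze_comp_l _ _ _) _.
exact: zze_inv_r_l.
Qed.

Lemma zze_square a a' b b' c (w : chom a' a) (w' : chom b' b) (x : chom a' b')
    (y : chom a b) (hw : inj_hom w) (hw' : inj_hom w') (p : zz b' c) :
  chom_comp x w' = chom_comp w y ->
  zz_equiv (zz_bwd hw (zz_fwd x p)) (zz_fwd y (zz_bwd hw' p)).
Proof.
move=> square.
apply: zze_trans (zze_bwd hw (zze_fwd x (zze_sym (zze_inv_r_l hw' p)))) _.
apply: zze_trans (zze_bwd hw (zze_comp_l _ _ _)) _; rewrite square.
apply: zze_trans (zze_bwd hw (zze_sym (zze_comp_l _ _ _))) _.
exact: zze_inv_l_l.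
Qed.

Definition normal_form a b (c : chom (sobj a) b) : zz a b :=
  zz_bwd (iota_inj a) (zz_fwd c (zz_nil b)).

Lemma normal_form_fwd a b d (g : chom a b) (c : chom (sobj b) d) :
  exists c' : chom (sobj a) d, zz_equiv (zz_fwd g (normal_form c)) (normal_form c').
Proof.
have [t] : inhabited (chom (sobj a) (sobj b)) := surj_chom_exists (@sobj_surj a)
  (ker_sub_sobj_l (ker_sub_trans (chom_ker_sub g) (@ker_sub_sobj b))).
exists (chom_comp t c); apply: zze_sym.
apply: zze_trans (zze_bwd _ (zze_sym (zze_comp_l _ _ _))) _.
exact/zze_square/surj_chom_unique/sobj_surj.
Qed.

Lemma normal_form_bwd a b d (w : chom b a) (hw : inj_hom w) (c : chom (sobj b) d) :
  exists c' : chom (sobj a) d, zz_equiv (zz_bwd hw (normal_form c)) (normal_form c').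
Proof.
have [u] : inhabited (chom (sobj a) (sobj b)) := surj_chom_exists (@sobj_surj a)
  (ker_sub_sobj_l (ker_sub_trans (inj_hom_ker_sub hw) (@ker_sub_sobj b))).
have hbw := inj_hom_comp (iota_inj b) hw.
exists (chom_comp u c).
apply: zze_trans (zze_bwd_comp _ _ hbw _) _; apply: zze_sym.
apply: zze_trans (zze_bwd _ (zze_sym (zze_comp_l _ _ _))) _.
apply: zze_trans (zze_square _ hbw _ (surj_chom_unique _ _ (@sobj_surj a))) _.
exact: zze_id_l.
Qed.

Lemma normal_formP a b (p : zz a b) : exists h, zz_equiv p (normal_form h).
Proof.
elim: p => [a0 | a0 b0 c0 g p [h ph] | a0 b0 c0 w hw p [h ph]].
- by exists (iota a0); apply/zze_sym/zze_inv_l_l.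
- have [c' gc] := normal_form_fwd g h.
  by exists c'; apply: zze_trans (zze_fwd g ph) gc.
- have [c' wc] := normal_form_bwd hw h.
  by exists c'; apply: zze_trans (zze_bwd hw ph) wc.
Qed.

End Localization.

Theorem mainTheorem18 (n : nat) : localization_thin n.
Proof.
move=> a b p q.
have [c1 p_c1] := normal_formP p; have [c2 q_c2] := normal_formP q.
rewrite (surj_chom_unique c1 c2 (@sobj_surj n a)) in p_c1.
exact: zze_trans p_c1 (zze_sym q_c2).
Qed.
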